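(* Let $T$ be a complete theory, $\varphi(x;y)$ a formula with characteristic sequence $\langle P_n:n<\omega\rangle$. Suppose there exists $\delta$ with $0<\delta<1$ such that for all $0<\epsilon<1$ and all $N\in\mathbb{N}$ there exist disjoint finite subsets $X_N,Y_N\subseteq P_1$ with $|X_N|=|Y_N|\geq N$ such that $(X_N,Y_N)$ is $\epsilon$-regular with density $\delta$ (with respect to the edge relation $P_2$). Then $P_1$ contains an infinite empty pair.
   Context: The characteristic sequence: $P_n(y_1,\dots,y_n):=\exists x\bigwedge_{i\le n}\varphi(x;y_i)$, interpreted in a sufficiently saturated model of $T$; standing assumption $T\vdash\forall y\exists z\forall x(\varphi(x;z)\leftrightarrow\neg\varphi(x;y))$. For finite disjoint $X,Y$, $e(X,Y)$ is the number of pairs $(x,y)\in X\times Y$ with $P_2(x,y)$, and the density is $\delta(X,Y)=e(X,Y)/|X||Y|$ (and $0$ if one is empty). $(X,Y)$ is $\epsilon$-regular if for all $X'\subseteq X$, $Y'\subseteq Y$ with $|X'|\ge\epsilon|X|$, $|Y'|\ge\epsilon|Y|$, $|\delta(X,Y)-\delta(X',Y')|<\epsilon$. An infinite empty pair in $P_1$ is a pair $(X,Y)$ of subsets of $P_1$ with $|X|=|Y|\ge\aleph_0$ and $\neg P_2(x,y)$ for all $x\in X,y\in Y$. *)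

From Stdlib Require Import Reals List Lra ClassicalEpsilon.
From Stdlib Require Vectors.Fin.
Import ListNotations.
Set Implicit Arguments.
Open Scope R_scope.

Record signature := Signature {
  Fn : Type; fn_ar : Fn -> nat;   (* function symbols (constants: arity 0) *)
  Rl : Type; rl_ar : Rl -> nat }.

Section Syntax.
Variable L : signature.

Inductive term : Type :=
  | tvar (n : nat)
  | tapp (f : Fn L) (args : Fin.t (fn_ar L f) -> term).

Inductive formula : Type :=
  | fFalse
  | fEq (t1 t2 : term)
  | fRel (r : Rl L) (args : Fin.t (rl_ar L r) -> term)
  | fNot (p : formula)
  | fAnd (p q : formula)
  | fOr (p q : formula)
  | fImp (p q : formula)
  | fEx (n : nat) (p : formula)
  | fAll (n : nat) (p : formula).

Fixpoint term_free (n : nat) (t : term) : Prop :=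
  match t with
  | tvar k => k = n
  | tapp f args => exists i, term_free n (args i)
  end.

Fixpoint free (n : nat) (p : formula) : Prop :=
  match p with
  | fFalse => False
  | fEq t1 t2 => term_free n t1 \/ term_free n t2
  | fRel r args => exists i, term_free n (args i)
  | fNot p => free n p
  | fAnd p q | fOr p q | fImp p q => free n p \/ free n q
  | fEx k p | fAll k p => k <> n /\ free n p
  end.

Definition sentence (p : formula) : Prop := forall n, ~ free n p.

Definition formula_in (p : formula) (k : nat) : Prop :=
  forall n, free n p -> (n < k)%nat.

Record structure := Structure {
  carrier : Type;
  witness : carrier;  (* structures are nonempty *)
  interp_fn : forall f : Fn L, (Fin.t (fn_ar L f) -> carrier) -> carrier;
  interp_rl : forall r : Rl L, (Fin.t (rl_ar L r) -> carrier) -> Prop }.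

Fixpoint eval (M : structure) (s : nat -> carrier M) (t : term) : carrier M :=
  match t with
  | tvar n => s n
  | tapp f args => interp_fn M f (fun i => eval M s (args i))
  end.

Definition update (A : Type) (s : nat -> A) (n : nat) (a : A) : nat -> A :=
  fun k => if Nat.eqb k n then a else s k.

Fixpoint sat (M : structure) (s : nat -> carrier M) (p : formula) : Prop :=
  match p with
  | fFalse => False
  | fEq t1 t2 => eval M s t1 = eval M s t2
  | fRel r args => interp_rl M r (fun i => eval M s (args i))
  | fNot p => ~ sat M s p
  | fAnd p q => sat M s p /\ sat M s q
  | fOr p q => sat M s p \/ sat M s q
  | fImp p q => sat M s p -> sat M s q
  | fEx k p => exists a, sat M (update s k a) p
  | fAll k p => forall a, sat M (update s k a) p
  end.

Definition theory := formula -> Prop.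

Definition is_model (M : structure) (T : theory) : Prop :=
  forall p, T p -> forall s, sat M s p.

(** A complete theory: a consistent set of sentences deciding every sentence
    (T |- sigma is taken semantically, i.e. truth in all models of T). *)
Definition complete (T : theory) : Prop :=
  (forall p, T p -> sentence p) /\
  (exists M : structure, is_model M T) /\
  (forall sigma, sentence sigma ->
     (forall M : structure, is_model M T -> forall s, sat M s sigma) \/
     (forall M : structure, is_model M T -> forall s, sat M s (fNot sigma))).

(** aleph_1-saturation: every set of formulas in the free variable 0 with
    parameters from a countable set (the range of [sigma]), finitely
    satisfiable in M, is realized in M. *)
Definition aleph1_saturated (M : structure) : Prop :=
  forall (sigma : nat -> carrier M) (P : formula -> Prop),
    (forall l : list formula, (forall p, In p l -> P p) ->
       exists a, forall p, In p l -> sat M (update sigma 0 a) p) ->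
    exists a, forall p, P p -> sat M (update sigma 0 a) p.

(** * phi(x;y), with x = variables 0..kx-1 and y = variables kx..kx+ky-1.
    Tuples are lists of elements of the carrier. *)
Definition agrees (M : structure) (s : nat -> carrier M) (l : list (carrier M)) :=
  forall i v, nth_error l i = Some v -> s i = v.

Definition phi_holds (M : structure) (phi : formula) (a b : list (carrier M)) : Prop :=
  forall s, agrees M s (a ++ b) -> sat M s phi.

(** Characteristic sequence: P_n(b_1,...,b_n) := exists x, /\_i phi(x; b_i),
    where n is the length of the list [bs]. *)
Definition Pn (M : structure) (phi : formula) (kx ky : nat)
    (bs : list (list (carrier M))) : Prop :=
  (forall b, In b bs -> length b = ky) /\
  exists a, length a = kx /\ forall b, In b bs -> phi_holds M phi a b.

Definition P1 M phi kx ky (b : list (carrier M)) := Pn M phi kx ky [b].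
Definition P2 M phi kx ky (b c : list (carrier M)) := Pn M phi kx ky [b; c].

(** Standing assumption: T |- forall y exists z forall x (phi(x;z) <-> ~phi(x;y)). *)
Definition standing (T : theory) (phi : formula) (kx ky : nat) : Prop :=
  forall N : structure, is_model N T ->
    forall b, length b = ky ->
      exists c, length c = ky /\
        forall a, length a = kx -> (phi_holds N phi a c <-> ~ phi_holds N phi a b).

Definition P2b M phi kx ky (b c : list (carrier M)) : bool :=
  if excluded_middle_informative (P2 M phi kx ky b c) then true else false.

Definition edges M phi kx ky (X Y : list (list (carrier M))) : nat :=
  length (filter (fun p => P2b M phi kx ky (fst p) (snd p)) (list_prod X Y)).

Definition density M phi kx ky (X Y : list (list (carrier M))) : R :=
  if (Nat.eqb (length X) 0 || Nat.eqb (length Y) 0)%bool then 0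
  else INR (edges M phi kx ky X Y) / (INR (length X) * INR (length Y)).

(** finite sets are duplicate-free lists *)
Definition eps_regular M phi kx ky (eps : R) (X Y : list (list (carrier M))) : Prop :=
  forall X' Y' : list (list (carrier M)),
    NoDup X' -> incl X' X -> NoDup Y' -> incl Y' Y ->
    INR (length X') >= eps * INR (length X) ->
    INR (length Y') >= eps * INR (length Y) ->
    Rabs (density M phi kx ky X Y - density M phi kx ky X' Y') < eps.

Definition infinite_empty_pair M phi kx ky : Prop :=
  exists X Y : list (carrier M) -> Prop,
    (forall b, X b -> P1 M phi kx ky b) /\
    (forall b, Y b -> P1 M phi kx ky b) /\
    (* |X| = |Y| : a bijection from X onto Y *)
    (exists g : list (carrier M) -> list (carrier M),
        (forall b, X b -> Y (g b)) /\
        (forall b b', X b -> X b' -> g b = g b' -> b = b') /\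
        (forall c, Y c -> exists b, X b /\ g b = c)) /\
    (* |X| >= aleph_0 *)
    (exists f : nat -> list (carrier M),
        (forall n, X (f n)) /\ (forall n m, f n = f m -> n = m)) /\
    (forall b c, X b -> Y c -> ~ P2 M phi kx ky b c).

End Syntax.

From Stdlib Require Import Reals List Lia Lra ClassicalEpsilon Classical FunctionalExtensionality.
Import ListNotations.
Open Scope R_scope.

(* In an eps-regular pair of density delta < 1, every large set of right vertices misses most
   of the neighbourhood of some left vertex.  Choosing t left vertices greedily and shrinking
   the right side to their common non-neighbours therefore leaves an empty t x t pair inside
   P_1, for every t.  By aleph_1-saturation these finite empty pairs glue into an infinite one:
   the entries of the tuples b_0, c_0, b_1, c_1, ... are realized one variable at a time, each
   time realizing the countable type "b_i, c_j (i, j < n) form an empty pair of distinct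
   tuples, for every n" over the values already chosen. *)

Lemma pow_le_antitone (x : R) (m n : nat) : 0 <= x <= 1 -> (m <= n)%nat -> x ^ n <= x ^ m.
Proof.
  intros hx hmn. replace n with (m + (n - m))%nat by lia. rewrite pow_add.
  assert (h1 : x ^ (n - m) <= 1) by (rewrite <- (pow1 (n - m)); apply pow_incr; lra).
  assert (h0 : 0 <= x ^ m) by (apply pow_le; lra).
  nra.
Qed.

Lemma map_nth_seq {A : Type} (l : list A) (d : A) :
  map (fun i => nth i l d) (seq 0 (length l)) = l.
Proof.
  induction l as [|x l IH]; simpl; auto. f_equal.
  rewrite <- seq_shift, map_map. exact IH.
Qed.

Lemma NoDup_firstn {A : Type} k (l : list A) : NoDup l -> NoDup (firstn k l).
Proof. rewrite <- (firstn_skipn k l) at 1. apply NoDup_app_remove_r. Qed.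

Lemma incl_firstn {A : Type} k (l : list A) : incl (firstn k l) l.
Proof. intros z hz. rewrite <- (firstn_skipn k l). apply in_or_app. auto. Qed.

Definition notinb {A : Type} (C : list A) (x : A) : bool :=
  if excluded_middle_informative (In x C) then false else true.

Lemma length_filter_notinb {A : Type} (X C : list A) :
  NoDup X -> (length X <= length (filter (notinb C) X) + length C)%nat.
Proof.
  intros ndX. rewrite <- (filter_length (notinb C) X).
  enough (length (filter (fun x => negb (notinb C x)) X) <= length C)%nat by lia.
  apply NoDup_incl_length; [apply NoDup_filter; exact ndX|].
  intros z hz. apply filter_In in hz as [_ hz]. unfold notinb in hz.
  destruct (excluded_middle_informative (In z C)) as [hzC|]; [exact hzC | discriminate].
Qed.

(* Edge counts, densities and regularity for an arbitrary relation [E]; for [E := P2b M phi kx ky]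
   they are, by conversion, the [edges], [density] and [eps_regular] of the statement. *)
Section Bipartite.
Context {A : Type} (E : A -> A -> bool).

Definition edge_count (X Y : list A) : nat :=
  length (filter (fun p => E (fst p) (snd p)) (list_prod X Y)).

Definition pair_density (X Y : list A) : R :=
  if (Nat.eqb (length X) 0 || Nat.eqb (length Y) 0)%bool then 0
  else INR (edge_count X Y) / (INR (length X) * INR (length Y)).

Definition regular_pair (eps : R) (X Y : list A) : Prop :=
  forall X' Y', NoDup X' -> incl X' X -> NoDup Y' -> incl Y' Y ->
    INR (length X') >= eps * INR (length X) ->
    INR (length Y') >= eps * INR (length Y) ->
    Rabs (pair_density X Y - pair_density X' Y') < eps.

Definition degree (x : A) (Y : list A) : nat := length (filter (E x) Y).

Definition non_neighbours (x : A) (Y : list A) : list A := filter (fun y => negb (E x y)) Y.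

Lemma length_non_neighbours x Y :
  INR (length (non_neighbours x Y)) = INR (length Y) - INR (degree x Y).
Proof.
  unfold non_neighbours, degree. rewrite <- (filter_length (E x) Y), plus_INR. ring.
Qed.

Lemma edge_count_cons x X Y : edge_count (x :: X) Y = (degree x Y + edge_count X Y)%nat.
Proof.
  unfold edge_count, degree; simpl. rewrite filter_app, length_app. f_equal.
  induction Y as [|y Y IH]; simpl; auto. destruct (E x y); simpl; auto.
Qed.

Lemma edge_count_ge c X Y : (forall x, In x X -> c <= INR (degree x Y)) ->
  c * INR (length X) <= INR (edge_count X Y).
Proof.
  induction X as [|x X IH]; intros H.
  - unfold edge_count. simpl. lra.
  - rewrite edge_count_cons. simpl length. rewrite S_INR, plus_INR.
    assert (h1 := H x (or_introl eq_refl)).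
    assert (h2 := IH (fun z hz => H z (or_intror hz))). lra.
Qed.

Lemma edge_count_gt c X Y : X <> [] -> (forall x, In x X -> c < INR (degree x Y)) ->
  c * INR (length X) < INR (edge_count X Y).
Proof.
  destruct X as [|x X]; intros hne H; [congruence|].
  rewrite edge_count_cons. simpl length. rewrite S_INR, plus_INR.
  assert (h1 := H x (or_introl eq_refl)).
  assert (h2 : c * INR (length X) <= INR (edge_count X Y)).
  { apply edge_count_ge. intros z hz. apply Rlt_le, H. right. exact hz. }
  lra.
Qed.

Lemma pair_density_gt c X Y : X <> [] -> Y <> [] ->
  (forall x, In x X -> c * INR (length Y) < INR (degree x Y)) -> c < pair_density X Y.
Proof.
  intros hX hY H.
  assert (hXpos : 0 < INR (length X)) by (apply lt_0_INR; destruct X; simpl; [congruence|lia]).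
  assert (hYpos : 0 < INR (length Y)) by (apply lt_0_INR; destruct Y; simpl; [congruence|lia]).
  assert (hE := edge_count_gt (c * INR (length Y)) X Y hX H).
  unfold pair_density.
  destruct (Nat.eqb_spec (length X) 0) as [e|_]; [rewrite e in hXpos; simpl in hXpos; lra|].
  destruct (Nat.eqb_spec (length Y) 0) as [e|_]; [rewrite e in hYpos; simpl in hYpos; lra|].
  simpl. apply Rmult_lt_reg_r with (INR (length X) * INR (length Y)); [nra|].
  unfold Rdiv. rewrite Rmult_assoc, Rinv_l by nra. nra.
Qed.

(* The greedy step: the vertices of [X] outside [C] are too many for all of them to have
   density [> delta + eps] into [Y'], so one of them misses most of [Y']. *)
Lemma regular_pair_non_neighbours X Y Y' C n delta eps :
  NoDup X -> length X = n -> length Y = n -> regular_pair eps X Y -> pair_density X Y = delta ->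
  NoDup Y' -> incl Y' Y -> INR (length Y') >= eps * INR n ->
  INR (length C) + eps * INR n < INR n -> 0 < eps ->
  exists x, In x X /\ ~ In x C /\
    (1 - delta - eps) * INR (length Y') <= INR (length (non_neighbours x Y')).
Proof.
  intros ndX lX lY hreg hdens ndY' iY' hY' hC heps.
  destruct (classic (exists x, In x X /\ ~ In x C /\
    (1 - delta - eps) * INR (length Y') <= INR (length (non_neighbours x Y')))) as [|Hno];
    [assumption | exfalso].
  set (X' := filter (notinb C) X).
  assert (hX' : INR (length X') >= eps * INR (length X)).
  { assert (h := le_INR _ _ (length_filter_notinb X C ndX)). fold X' in h.
    rewrite plus_INR, lX in h. rewrite lX. lra. }
  assert (hn : 0 < INR n) by (pose proof (pos_INR (length C)); pose proof (pos_INR n); nra).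
  assert (hX'ne : X' <> []) by (intro h; rewrite h, lX in hX'; simpl in hX'; nra).
  assert (hY'ne : Y' <> []) by (intro h; rewrite h in hY'; simpl in hY'; nra).
  assert (hdeg : forall x, In x X' -> (delta + eps) * INR (length Y') < INR (degree x Y')).
  { intros x hx. apply filter_In in hx as [hxX hxC].
    assert (hx' : ~ In x C).
    { unfold notinb in hxC. destruct (excluded_middle_informative (In x C)); [discriminate | auto]. }
    assert (h : ~ (1 - delta - eps) * INR (length Y') <= INR (length (non_neighbours x Y')))
      by (intro h; apply Hno; exists x; auto).
    rewrite length_non_neighbours in h. lra. }
  assert (hgt := pair_density_gt _ X' Y' hX'ne hY'ne hdeg).
  assert (hsub : incl X' X) by (intros z hz; apply filter_In in hz; tauto).
  rewrite <- lY in hY'.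
  destruct (Rabs_def2 _ _ (hreg X' Y' (NoDup_filter _ ndX) hsub ndY' iY' hX' hY')). lra.
Qed.

Lemma regular_pair_empty_subpair X Y delta t :
  0 < delta < 1 -> NoDup X -> NoDup Y -> length X = length Y ->
  regular_pair (((1 - delta) / 2) ^ t) X Y -> pair_density X Y = delta ->
  (2 * t <= length X)%nat ->
  forall k, (k <= t)%nat -> exists C Y', NoDup C /\ incl C X /\ length C = k /\
    NoDup Y' /\ incl Y' Y /\ ((1 - delta) / 2) ^ k * INR (length X) <= INR (length Y') /\
    (forall x y, In x C -> In y Y' -> E x y = false).
Proof.
  intros hdelta ndX ndY lXY hreg hdens htn.
  set (q := (1 - delta) / 2) in *. set (n := length X) in *.
  assert (hq : 0 < q < 1 / 2) by (unfold q; lra).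
  assert (hn : 0 <= INR n) by apply pos_INR.
  induction k as [|k IH]; intros hk.
  - exists [], Y. repeat split; auto using NoDup_nil, incl_nil_l, incl_refl.
    + rewrite <- lXY. lra.
    + intros x y [].
  - destruct (IH ltac:(lia)) as (C & Y' & ndC & iC & lC & ndY' & iY' & hY' & hE).
    assert (hqtk : q ^ t <= q ^ k) by (apply pow_le_antitone; lra || lia).
    assert (hqt : q ^ t <= q ^ 1) by (apply pow_le_antitone; lra || lia).
    rewrite pow_1 in hqt.
    assert (hqt0 : 0 < q ^ t) by (apply pow_lt; lra).
    assert (hY't : INR (length Y') >= q ^ t * INR n) by nra.
    assert (hCt : INR (length C) + q ^ t * INR n < INR n).
    { rewrite lC. apply le_INR in htn. rewrite mult_INR in htn. simpl in htn.
      assert (INR (S k) <= INR t) by (apply le_INR; lia). rewrite S_INR in *. nra. }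
    destruct (regular_pair_non_neighbours X Y Y' C n delta (q ^ t) ndX eq_refl (eq_sym lXY) hreg hdens ndY' iY'
      hY't hCt hqt0) as (x & hx & hxC & hxY').
    exists (x :: C), (non_neighbours x Y'). repeat split.
    + constructor; auto.
    + intros z [<-|hz]; auto.
    + simpl. lia.
    + apply NoDup_filter, ndY'.
    + intros z hz. apply iY'. apply filter_In in hz. tauto.
    + simpl. assert (0 <= q ^ k * INR n) by (apply Rmult_le_pos; [apply pow_le|]; lra).
      assert (q <= 1 - delta - q ^ t) by (unfold q in *; lra). nra.
    + intros z y [<-|hz] hy.
      * apply filter_In in hy as [_ hy]. destruct (E x y); [discriminate|reflexivity].
      * apply hE; [exact hz|]. apply filter_In in hy. tauto.
Qed.

(* Regularity at scale [eps = q ^ t], [q = (1 - delta) / 2], lets the greedy step run [t] times;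
   the common size [n] is taken large enough that [q ^ t * n >= t]. *)
Lemma large_empty_pairs (P : A -> Prop) delta : 0 < delta < 1 ->
  (forall eps, 0 < eps < 1 -> forall N, exists X Y,
     NoDup X /\ NoDup Y /\ (forall b, In b X -> P b) /\ (forall b, In b Y -> P b) /\
     length X = length Y /\ (N <= length X)%nat /\
     regular_pair eps X Y /\ pair_density X Y = delta) ->
  forall t, exists X Y, NoDup X /\ NoDup Y /\ length X = t /\ length Y = t /\
    (forall b, In b X -> P b) /\ (forall b, In b Y -> P b) /\
    (forall b c, In b X -> In c Y -> E b c = false).
Proof.
  intros hdelta Hreg [|t'].
  { exists [], []. repeat split; auto using NoDup_nil; simpl; tauto. }
  set (t := S t'). set (q := (1 - delta) / 2).
  assert (hq : 0 < q < 1) by (unfold q; lra).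
  assert (hqt0 : 0 < q ^ t) by (apply pow_lt; lra).
  assert (hqt1 : q ^ t < 1).
  { assert (h : q ^ t <= q ^ 1) by (apply pow_le_antitone; unfold t; lra || lia).
    rewrite pow_1 in h. lra. }
  destruct (INR_unbounded (INR t / q ^ t + 2 * INR t)) as [N hN].
  destruct (Hreg (q ^ t) (conj hqt0 hqt1) N)
    as (X & Y & ndX & ndY & hX & hY & lXY & hNX & hreg & hdens).
  assert (hNX' := le_INR _ _ hNX).
  assert (hsmall : 0 <= INR t / q ^ t) by (apply Rmult_le_pos; [apply pos_INR | apply Rlt_le, Rinv_0_lt_compat; lra]).
  assert (htn : (2 * t <= length X)%nat).
  { apply INR_le. rewrite mult_INR. simpl (INR 2). lra. }
  destruct (regular_pair_empty_subpair X Y delta t hdelta ndX ndY lXY hreg hdens htn t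
    (le_n t)) as (C & Y' & ndC & iC & lC & ndY' & iY' & hY' & hE).
  fold q in hY'.
  assert (hY't : (t <= length Y')%nat).
  { apply INR_le.
    assert (h : INR t / q ^ t * q ^ t = INR t) by (field; lra).
    assert (hle : INR t / q ^ t <= INR (length X)) by (pose proof (pos_INR t); lra).
    apply (Rmult_le_compat_r (q ^ t)) in hle; lra. }
  exists C, (firstn t Y'). repeat split.
  - exact ndC.
  - apply NoDup_firstn, ndY'.
  - exact lC.
  - rewrite length_firstn. lia.
  - intros b hb. apply hX, iC, hb.
  - intros b hb. apply hY, iY', (incl_firstn t Y'), hb.
  - intros b c hb hc. apply hE; [exact hb | apply (incl_firstn t Y'), hc].
Qed.
End Bipartite.

Section Semantics.
Context {L : signature} (M : structure L).
Local Open Scope nat_scope.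

Lemma eval_coincide (s1 s2 : nat -> carrier M) t :
  (forall n, term_free n t -> s1 n = s2 n) -> eval M s1 t = eval M s2 t.
Proof.
  induction t as [k|f args IH]; simpl; intros H.
  - apply H. reflexivity.
  - f_equal. apply functional_extensionality. intro i. apply IH.
    intros n hn. apply H. exists i. exact hn.
Qed.

Lemma sat_coincide (p : formula L) : forall s1 s2 : nat -> carrier M,
  (forall n, free n p -> s1 n = s2 n) -> (sat M s1 p <-> sat M s2 p).
Proof.
  induction p as [| t1 t2 | r args | p IH | p IHp q IHq | p IHp q IHq | p IHp q IHq
                  | k p IH | k p IH]; simpl; intros s1 s2 H.
  - tauto.
  - rewrite (eval_coincide s1 s2 t1), (eval_coincide s1 s2 t2); [tauto| |];
      intros; apply H; auto.
  - replace (fun i => eval M s1 (args i)) with (fun i => eval M s2 (args i)); [tauto|].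
    apply functional_extensionality. intro i. symmetry. apply eval_coincide.
    intros n hn. apply H. exists i. exact hn.
  - rewrite (IH s1 s2 H). tauto.
  - rewrite (IHp s1 s2), (IHq s1 s2); [tauto| |]; intros; apply H; auto.
  - rewrite (IHp s1 s2), (IHq s1 s2); [tauto| |]; intros; apply H; auto.
  - rewrite (IHp s1 s2), (IHq s1 s2); [tauto| |]; intros; apply H; auto.
  - assert (HH : forall a, sat M (update s1 k a) p <-> sat M (update s2 k a) p).
    { intro a. apply IH. intros n hn. unfold update.
      destruct (Nat.eqb_spec n k); [reflexivity | apply H; auto]. }
    split; intros [a ha]; exists a; apply HH; exact ha.
  - assert (HH : forall a, sat M (update s1 k a) p <-> sat M (update s2 k a) p).
    { intro a. apply IH. intros n hn. unfold update.
      destruct (Nat.eqb_spec n k); [reflexivity | apply H; auto]. }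
    split; intros ha a; apply HH, ha.
Qed.

Definition fTrue : formula L := fNot (fFalse L).
Definition fExs (vs : list nat) (p : formula L) : formula L := fold_right (@fEx L) p vs.
Definition fAlls (vs : list nat) (p : formula L) : formula L := fold_right (@fAll L) p vs.
Definition fAnds (ps : list (formula L)) : formula L := fold_right (@fAnd L) fTrue ps.

Lemma sat_fExs vs p s : sat M s (fExs vs p) <->
  exists t, (forall n, ~ In n vs -> t n = s n) /\ sat M t p.
Proof.
  revert s. induction vs as [|v vs IH]; simpl; intros s.
  - split; [intro h; exists s; auto | intros [t [ht h]]].
    replace s with t; [exact h|]. apply functional_extensionality. intro n. apply ht. auto.
  - split.
    + intros [a ha]. apply IH in ha as [t [ht h]]. exists t. split; [|exact h].
      intros n hn. rewrite ht by tauto. unfold update.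
      destruct (Nat.eqb_spec n v); [subst; tauto | reflexivity].
    + intros [t [ht h]]. exists (t v). apply IH. exists t. split; [|exact h].
      intros n hn. unfold update.
      destruct (Nat.eqb_spec n v); [subst; reflexivity | apply ht; intros [e|e]; [congruence | contradiction]].
Qed.

Lemma sat_fAlls vs p s : sat M s (fAlls vs p) <->
  forall t, (forall n, ~ In n vs -> t n = s n) -> sat M t p.
Proof.
  revert s. induction vs as [|v vs IH]; simpl; intros s.
  - split; [intros h t ht | intro h; apply h; auto].
    replace t with s; [exact h|]. apply functional_extensionality. intro n. symmetry. apply ht. auto.
  - split.
    + intros h t ht. apply (proj1 (IH _) (h (t v))).
      intros n hn. unfold update.
      destruct (Nat.eqb_spec n v); [subst; reflexivity | apply ht; intros [e|e]; [congruence | contradiction]].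
    + intros h a. apply IH. intros t ht. apply h.
      intros n hn. rewrite ht by tauto. unfold update.
      destruct (Nat.eqb_spec n v); [subst; tauto | reflexivity].
Qed.

Lemma sat_fAnds ps s : sat M s (fAnds ps) <-> forall p, In p ps -> sat M s p.
Proof.
  induction ps as [|p ps IH]; simpl.
  - split; [intros _ p [] | intros _ h; exact h].
  - rewrite IH. split; [intros [h1 h2] q [<-|hq]; auto | intro h; split; auto].
Qed.

Lemma agrees_map (s' s : nat -> carrier M) (ws : list nat) :
  agrees M s' (map s ws) <-> forall i, i < length ws -> s' i = s (nth i ws 0).
Proof.
  unfold agrees. split.
  - intros h i hi. apply h. rewrite nth_error_map, (nth_error_nth' ws 0 hi). reflexivity.
  - intros h i v hv. rewrite nth_error_map in hv.
    destruct (nth_error ws i) as [w|] eqn:e; simpl in hv; [|discriminate].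
    injection hv as <-. assert (hi : i < length ws) by (apply nth_error_Some; congruence).
    rewrite h by exact hi. rewrite (nth_error_nth' ws 0 hi) in e. congruence.
Qed.

Lemma exists_update_seq (s : nat -> carrier M) start (a : list (carrier M)) :
  exists t, (forall n, ~ In n (seq start (length a)) -> t n = s n) /\
    map t (seq start (length a)) = a.
Proof.
  set (t := fun n => if in_dec Nat.eq_dec n (seq start (length a))
                     then nth (n - start) a (s n) else s n).
  exists t. split.
  - intros n hn. unfold t. destruct (in_dec Nat.eq_dec n (seq start (length a))); tauto.
  - apply (nth_ext _ _ (t 0) (s 0)); [rewrite length_map, length_seq; reflexivity|].
    intros i hi. rewrite length_map, length_seq in hi.
    rewrite map_nth, seq_nth by exact hi. unfold t.
    destruct (in_dec Nat.eq_dec (start + i) (seq start (length a))) as [_|h].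
    + replace (start + i - start) with i by lia. apply nth_indep, hi.
    + exfalso. apply h, in_seq. lia.
Qed.

End Semantics.

Lemma list_index_bound {B : Type} (f : nat -> B) (l : list B) :
  (forall p, In p l -> exists n, p = f n) ->
  exists N, forall p, In p l -> exists n, (n <= N)%nat /\ p = f n.
Proof.
  induction l as [|p l IH]; intros h.
  - exists 0%nat. intros p [].
  - destruct IH as [N hN]; [intros q hq; apply h; right; exact hq|].
    destruct (h p (or_introl eq_refl)) as [n0 ->].
    exists (Nat.max n0 N). intros q [<-|hq].
    + exists n0. split; [lia | reflexivity].
    + destruct (hN q hq) as [n [hn ->]]. exists n. split; [lia | reflexivity].
Qed.

(* The conditions [theta n] constrain the variables [slot k]; these are realized one at a
   time, and the saturation axiom sees the values already chosen as the parameters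
   [param k], the variable being realized being [0]. *)
Section Saturation.
Context {L : signature} {M : structure L}.
Hypothesis hsat : aleph1_saturated M.
Variable base : nat.
Hypothesis base_pos : (0 < base)%nat.
Local Open Scope nat_scope.

Definition slot k := base + 2 * k.
Definition param k := base + 2 * k + 1.

Variables (theta : nat -> formula L) (support : nat -> nat).
Hypothesis theta_local : forall n (t t' : nat -> carrier M),
  (forall k, k < support n -> t (slot k) = t' (slot k)) -> sat M t (theta n) -> sat M t' (theta n).
Hypothesis theta_antitone : forall n N t, n <= N -> sat M t (theta N) -> sat M t (theta n).
Hypothesis theta_satisfiable : forall n, exists t, sat M t (theta n).

Definition extendable m (u : nat -> carrier M) : Prop :=
  forall n, exists t, (forall k, k < m -> t (slot k) = u (slot k)) /\ sat M t (theta n).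

Lemma update_slot_ne (u : nat -> carrier M) m k a :
  k <> m -> update u (slot m) a (slot k) = u (slot k).
Proof. intros h. unfold update, slot. destruct (Nat.eqb_spec (base + 2 * k) (base + 2 * m)); [lia | reflexivity]. Qed.

Lemma update_param (u : nat -> carrier M) k a : update u 0 a (param k) = u (param k).
Proof. unfold update, param. destruct (Nat.eqb_spec (base + 2 * k + 1) 0); [lia | reflexivity]. Qed.

Lemma in_slots x R : In x (map slot (seq 0 R)) <-> exists k, k < R /\ x = slot k.
Proof.
  rewrite in_map_iff. split.
  - intros [k [<- hk]]. apply in_seq in hk. exists k. split; [lia | reflexivity].
  - intros [k [hk ->]]. exists k. split; [reflexivity | apply in_seq; lia].
Qed.

Definition theta_ext m n : formula L :=
  fExs (map slot (seq 0 (S m + support n)))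
    (fAnds (fEq (tvar L (slot m)) (tvar L 0) :: theta n ::
            map (fun k => fEq (tvar L (slot k)) (tvar L (param k))) (seq 0 m))).

Lemma sat_theta_ext m n s : sat M s (theta_ext m n) <->
  exists t, t (slot m) = s 0 /\ sat M t (theta n) /\ forall k, k < m -> t (slot k) = s (param k).
Proof.
  set (R := S m + support n).
  assert (h0 : ~ In 0 (map slot (seq 0 R))).
  { rewrite in_slots. intros [k [_ hk]]. unfold slot in hk. lia. }
  assert (hp : forall k, ~ In (param k) (map slot (seq 0 R))).
  { intro k. rewrite in_slots. intros [k' [_ hk]]. unfold slot, param in hk. lia. }
  assert (hs : forall k, k < R -> In (slot k) (map slot (seq 0 R))).
  { intros k hk. apply in_slots. exists k. auto. }
  unfold theta_ext. fold R. rewrite sat_fExs. split.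
  - intros [t [ht hsat']]. rewrite sat_fAnds in hsat'. exists t. split; [|split].
    + rewrite <- (ht 0 h0). apply (hsat' (fEq (tvar L (slot m)) (tvar L 0))). left. reflexivity.
    + apply hsat'. right. left. reflexivity.
    + intros k hk. rewrite <- (ht _ (hp k)).
      apply (hsat' (fEq (tvar L (slot k)) (tvar L (param k)))). right. right.
      apply in_map_iff. exists k. split; [reflexivity | apply in_seq; lia].
  - intros [t [htm [hth htp]]].
    exists (fun x => if in_dec Nat.eq_dec x (map slot (seq 0 R)) then t x else s x).
    split; [intros x hx; destruct (in_dec Nat.eq_dec x (map slot (seq 0 R))); tauto|].
    apply sat_fAnds. intros q hq. destruct hq as [e|[e|hq]]; [subst q; cbn [sat eval]..|].
    + destruct (in_dec Nat.eq_dec (slot m) _) as [hin|h]; [|exfalso; apply h, hs; lia].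
      destruct (in_dec Nat.eq_dec 0 _) as [h|hnin]; [contradiction | exact htm].
    + apply (theta_local n t); [|exact hth]. intros k hk.
      destruct (in_dec Nat.eq_dec (slot k) _) as [hin|h]; [reflexivity | exfalso; apply h, hs; lia].
    + apply in_map_iff in hq as [k [<- hk]]. apply in_seq in hk. cbn [sat eval].
      destruct (in_dec Nat.eq_dec (slot k) _) as [hin|h]; [|exfalso; apply h, hs; lia].
      destruct (in_dec Nat.eq_dec (param k) _) as [h|hnin]; [exfalso; apply (hp k), h|].
      apply htp. lia.
Qed.

Lemma extendable_step m u : extendable m u -> exists a, extendable (S m) (update u (slot m) a).
Proof.
  intros hext.
  set (sigma := fun x => u (x - 1)).
  assert (hsigma : forall k, sigma (param k) = u (slot k)).
  { intro k. unfold sigma, param, slot. f_equal. lia. }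
  destruct (hsat sigma (fun p => exists n, p = theta_ext m n)) as [a ha].
  - intros l hl. destruct (list_index_bound (theta_ext m) l hl) as [N hN].
    destruct (hext N) as [t [ht htN]].
    exists (t (slot m)). intros p hp. destruct (hN p hp) as [n [hn ->]].
    apply sat_theta_ext. exists t. split; [|split].
    + reflexivity.
    + apply (theta_antitone n N); assumption.
    + intros k hk. rewrite update_param, hsigma. apply ht, hk.
  - exists a. intros n.
    destruct (proj1 (sat_theta_ext m n _) (ha _ (ex_intro _ n eq_refl))) as [t [htm [hth htp]]].
    exists t. split; [|exact hth]. intros k hk.
    destruct (Nat.eq_dec k m) as [->|hne].
    + rewrite htm. unfold update. rewrite !Nat.eqb_refl. reflexivity.
    + rewrite update_slot_ne, htp, update_param, hsigma by lia. reflexivity.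
Qed.

Lemma extendable_chain : exists us : nat -> nat -> carrier M,
  (forall m, extendable m (us m)) /\ (forall m k, k < m -> us (S m) (slot k) = us m (slot k)).
Proof.
  assert (HG : forall m u, exists a, extendable m u -> extendable (S m) (update u (slot m) a)).
  { intros m u. destruct (classic (extendable m u)) as [h|h].
    - destruct (extendable_step m u h) as [a ha]. exists a. auto.
    - exists (witness M). contradiction. }
  set (G := fun m u => proj1_sig (constructive_indefinite_description _ (HG m u))).
  assert (hG : forall m u, extendable m u -> extendable (S m) (update u (slot m) (G m u))).
  { intros m u. unfold G. destruct (constructive_indefinite_description _ (HG m u)). auto. }
  exists (fix us m := match m with
                      | 0 => fun _ => witness M
                      | S m => update (us m) (slot m) (G m (us m)) end).
  split.
  - induction m as [|m IH].
    + intros n. destruct (theta_satisfiable n) as [t ht]. exists t. split; [lia | exact ht].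
    + apply hG, IH.
  - intros m k hk. simpl. apply update_slot_ne. lia.
Qed.

Theorem saturated_realizes_chain : exists t : nat -> carrier M, forall n, sat M t (theta n).
Proof.
  destruct extendable_chain as [us [hext hstep]].
  assert (hstable : forall k m, k < m -> us m (slot k) = us (S k) (slot k)).
  { intros k m hkm. induction hkm as [|m hkm IH]; [reflexivity|]. rewrite hstep by lia. exact IH. }
  exists (fun x => us x x). intro n.
  destruct (hext (support n) n) as [t [ht hth]].
  apply (theta_local n t); [|exact hth]. intros k hk. rewrite ht by exact hk.
  rewrite (hstable k (support n)), (hstable k (slot k)) by (unfold slot; lia). reflexivity.
Qed.

End Saturation.

Section CharacteristicSequence.
Context {L : signature} (M : structure L) (phi : formula L) (kx ky : nat).
Hypothesis hphi : formula_in phi (kx + ky).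
Local Open Scope nat_scope.
Notation K := (kx + ky).

(* Lacking substitution, [phi] with its variables renamed to [ws] is written as
   "for all v_0 .. v_(K-1), if v_j = w_j for all j then phi".  Variables [0 .. K-1] are thus
   reserved for [phi], [K .. K+kx-1] serve as the existential [x] of [P_n], and the tuples
   live in the slots above. *)
Definition phi_at (ws : list nat) : formula L :=
  fAlls (seq 0 K)
    (fImp (fAnds (map (fun j => fEq (tvar L j) (tvar L (nth j ws 0))) (seq 0 K))) phi).

Lemma sat_phi_at xs ys s : length xs = kx -> length ys = ky ->
  (forall w, In w (xs ++ ys) -> K <= w) ->
  (sat M s (phi_at (xs ++ ys)) <-> phi_holds M phi (map s xs) (map s ys)).
Proof.
  intros hx hy hge. unfold phi_holds. rewrite <- map_app.
  set (ws := xs ++ ys) in *.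
  assert (hl : length ws = K) by (unfold ws; rewrite length_app; lia).
  assert (hws : forall j, j < K -> K <= nth j ws 0) by (intros j hj; apply hge, nth_In; lia).
  unfold phi_at. rewrite sat_fAlls. split.
  - intros H s' hag. rewrite agrees_map in hag.
    set (t := fun n => if n <? K then s (nth n ws 0) else s n).
    assert (ht : forall n, ~ In n (seq 0 K) -> t n = s n).
    { intros n hn. unfold t. destruct (Nat.ltb_spec n K); [|reflexivity].
      exfalso. apply hn, in_seq. lia. }
    assert (htphi : sat M t phi).
    { apply (H t ht), sat_fAnds. intros q hq. apply in_map_iff in hq as [j [<- hj]].
      apply in_seq in hj. cbn [sat eval]. unfold t.
      destruct (Nat.ltb_spec j K); [|lia]. specialize (hws j ltac:(lia)).
      destruct (Nat.ltb_spec (nth j ws 0) K); [lia | reflexivity]. }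
    apply (sat_coincide M phi t s'); [|exact htphi].
    intros n hn. apply hphi in hn. unfold t. destruct (Nat.ltb_spec n K); [|lia].
    symmetry. apply hag. lia.
  - intros H t ht heqs. apply H, agrees_map. intros i hi. rewrite hl in hi.
    rewrite sat_fAnds in heqs.
    assert (heq := heqs (fEq (tvar L i) (tvar L (nth i ws 0)))
      (in_map _ _ _ (proj2 (in_seq _ _ _) (conj (Nat.le_0_l i) hi)))).
    cbn [sat eval] in heq. rewrite heq. apply ht.
    intro hin. apply in_seq in hin. specialize (hws i hi). lia.
Qed.

Definition Pn_at (yss : list (list nat)) : formula L :=
  fExs (seq K kx) (fAnds (map (fun ys => phi_at (seq K kx ++ ys)) yss)).

Lemma sat_Pn_at yss s :
  (forall ys, In ys yss -> length ys = ky /\ forall y, In y ys -> K + kx <= y) ->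
  (sat M s (Pn_at yss) <-> Pn M phi kx ky (map (map s) yss)).
Proof.
  intros hyss.
  assert (hbound : forall ys, In ys yss -> forall w, In w (seq K kx ++ ys) -> K <= w).
  { intros ys hys w hw. apply in_app_or in hw as [hw|hw]; [apply in_seq in hw; lia|].
    apply (proj2 (hyss ys hys)) in hw. lia. }
  assert (houtside : forall t, (forall n, ~ In n (seq K kx) -> t n = s n) ->
            forall ys, In ys yss -> map t ys = map s ys).
  { intros t ht ys hys. apply map_ext_in. intros y hy. apply ht. intro hin.
    apply in_seq in hin. apply (proj2 (hyss ys hys)) in hy. lia. }
  assert (hlen : forall b, In b (map (map s) yss) -> length b = ky).
  { intros b hb. apply in_map_iff in hb as [ys [<- hys]]. rewrite length_map. apply hyss, hys. }
  unfold Pn_at, Pn. rewrite sat_fExs. split.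
  - intros [t [ht hall]]. rewrite sat_fAnds in hall. split; [exact hlen|].
    exists (map t (seq K kx)). split; [rewrite length_map, length_seq; reflexivity|].
    intros b hb. apply in_map_iff in hb as [ys [<- hys]]. rewrite <- (houtside t ht ys hys).
    apply (sat_phi_at (seq K kx) ys t); [apply length_seq | apply hyss, hys | apply hbound, hys |].
    apply hall, in_map_iff. exists ys. split; [reflexivity | exact hys].
  - intros [_ [a [ha hall]]]. destruct (exists_update_seq M s K a) as [t [ht hta]].
    rewrite ha in ht, hta. exists t. split; [exact ht|].
    apply sat_fAnds. intros q hq. apply in_map_iff in hq as [ys [<- hys]].
    apply (sat_phi_at (seq K kx) ys t); [apply length_seq | apply hyss, hys | apply hbound, hys |].
    rewrite hta, (houtside t ht ys hys). apply hall, in_map_iff. exists ys. split; [reflexivity | exact hys].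
Qed.

Lemma sat_P1_at ys s : length ys = ky -> (forall y, In y ys -> K + kx <= y) ->
  (sat M s (Pn_at [ys]) <-> P1 M phi kx ky (map s ys)).
Proof. intros hl hy. apply (sat_Pn_at [ys]). intros ys' [<-|[]]. auto. Qed.

Lemma sat_P2_at ys zs s : length ys = ky -> (forall y, In y ys -> K + kx <= y) ->
  length zs = ky -> (forall z, In z zs -> K + kx <= z) ->
  (sat M s (Pn_at [ys; zs]) <-> P2 M phi kx ky (map s ys) (map s zs)).
Proof. intros hl hy hl' hz. apply (sat_Pn_at [ys; zs]). intros ys' [<-|[<-|[]]]; auto. Qed.

Definition eq_at (ws1 ws2 : list nat) : formula L :=
  fAnds (map (fun p => fEq (tvar L (fst p)) (tvar L (snd p))) (combine ws1 ws2)).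

Lemma sat_eq_at ws1 ws2 s : length ws1 = length ws2 ->
  (sat M s (eq_at ws1 ws2) <-> map s ws1 = map s ws2).
Proof.
  revert ws2. induction ws1 as [|w ws IH]; intros [|w2 ws2] hl; simpl in hl; try discriminate.
  - simpl. tauto.
  - change (eval M s (tvar L w) = eval M s (tvar L w2) /\ sat M s (eq_at ws ws2) <->
            s w :: map s ws = s w2 :: map s ws2).
    rewrite IH by lia. cbn. split; [intros [-> ->]; reflexivity | intro h; injection h; auto].
Qed.

Definition tuple_base := S (K + kx).

Definition tuple_vars j : list nat := map (fun c => slot tuple_base (ky * j + c)) (seq 0 ky).

Lemma length_tuple_vars j : length (tuple_vars j) = ky.
Proof. unfold tuple_vars. rewrite length_map, length_seq. reflexivity. Qed.

Lemma tuple_vars_ge j y : In y (tuple_vars j) -> K + kx <= y.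
Proof. unfold tuple_vars, slot, tuple_base. intro h. apply in_map_iff in h as [c [<- _]]. lia. Qed.

Lemma map_tuple_vars_local (t t' : nat -> carrier M) J j :
  (forall k, k < ky * J -> t (slot tuple_base k) = t' (slot tuple_base k)) -> j < J ->
  map t (tuple_vars j) = map t' (tuple_vars j).
Proof.
  intros h hj. unfold tuple_vars. rewrite !map_map. apply map_ext_in.
  intros c hc. apply in_seq in hc. apply h. nia.
Qed.

Lemma exists_tuple_assignment (blk : nat -> list (carrier M)) :
  exists t, forall j, length (blk j) = ky -> map t (tuple_vars j) = blk j.
Proof.
  exists (fun x => let k := (x - tuple_base) / 2 in nth (k mod ky) (blk (k / ky)) (witness M)).
  intros j hj. unfold tuple_vars. rewrite map_map.
  transitivity (map (fun c => nth c (blk j) (witness M)) (seq 0 ky));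
    [|rewrite <- hj; apply map_nth_seq].
  apply map_ext_in. intros c hc. apply in_seq in hc. cbv zeta.
  replace ((slot tuple_base (ky * j + c) - tuple_base) / 2) with (ky * j + c)
    by (unfold slot; apply Nat.div_unique with 0; lia).
  assert (hq : (ky * j + c) / ky = j) by (symmetry; apply Nat.div_unique with c; lia).
  assert (hr : (ky * j + c) mod ky = c) by (symmetry; apply Nat.mod_unique with j; lia).
  rewrite hq, hr. reflexivity.
Qed.

Definition left_tuple (t : nat -> carrier M) i := map t (tuple_vars (2 * i)).
Definition right_tuple (t : nat -> carrier M) i := map t (tuple_vars (2 * i + 1)).

Definition pair_condition (t : nat -> carrier M) i j : Prop :=
  P1 M phi kx ky (left_tuple t i) /\ P1 M phi kx ky (right_tuple t j) /\
  ~ P2 M phi kx ky (left_tuple t i) (right_tuple t j) /\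
  (i <> j -> left_tuple t i <> left_tuple t j /\ right_tuple t i <> right_tuple t j).

Definition empty_pair_upto n (t : nat -> carrier M) : Prop :=
  forall i j, i < n -> j < n -> pair_condition t i j.

Definition pair_at i j : formula L :=
  fAnds [Pn_at [tuple_vars (2 * i)]; Pn_at [tuple_vars (2 * j + 1)];
         fNot (Pn_at [tuple_vars (2 * i); tuple_vars (2 * j + 1)]);
         if Nat.eqb i j then fTrue
         else fAnd (fNot (eq_at (tuple_vars (2 * i)) (tuple_vars (2 * j))))
                   (fNot (eq_at (tuple_vars (2 * i + 1)) (tuple_vars (2 * j + 1))))].

Lemma sat_pair_at t i j : sat M t (pair_at i j) <-> pair_condition t i j.
Proof.
  unfold pair_at, pair_condition, left_tuple, right_tuple. rewrite sat_fAnds.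
  rewrite <- !sat_P1_at, <- !sat_P2_at, <- !sat_eq_at
    by (apply length_tuple_vars || apply tuple_vars_ge || rewrite !length_tuple_vars; reflexivity).
  split.
  - intro h. split; [apply h; left; reflexivity|].
    split; [apply h; right; left; reflexivity|].
    split; [exact (h _ (or_intror (or_intror (or_introl eq_refl))))|].
    intro hij. assert (h4 := h _ (or_intror (or_intror (or_intror (or_introl eq_refl))))).
    destruct (Nat.eqb_spec i j); [contradiction | exact h4].
  - intros (h1 & h2 & h3 & h4) q hq. destruct hq as [e|[e|[e|[e|[]]]]]; subst q; auto.
    destruct (Nat.eqb_spec i j); [intros [] | exact (h4 n)].
Qed.

Definition empty_pair_at n : formula L :=
  fAnds (map (fun p => pair_at (fst p) (snd p)) (list_prod (seq 0 n) (seq 0 n))).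

Lemma sat_empty_pair_at n t : sat M t (empty_pair_at n) <-> empty_pair_upto n t.
Proof.
  unfold empty_pair_at, empty_pair_upto. rewrite sat_fAnds. split.
  - intros h i j hi hj. apply sat_pair_at, h, in_map_iff.
    exists (i, j). split; [reflexivity | apply in_prod; apply in_seq; lia].
  - intros h q hq. apply in_map_iff in hq as [[i j] [<- hp]].
    apply in_prod_iff in hp as [hi hj]. apply in_seq in hi, hj.
    apply sat_pair_at, h; simpl; lia.
Qed.

Lemma empty_pair_upto_local n (t t' : nat -> carrier M) :
  (forall k, k < ky * (2 * n) -> t (slot tuple_base k) = t' (slot tuple_base k)) ->
  empty_pair_upto n t -> empty_pair_upto n t'.
Proof.
  intros h ht i j hi hj.
  unfold pair_condition, left_tuple, right_tuple.
  rewrite <- !(map_tuple_vars_local t t' (2 * n)) by (exact h || lia).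
  apply ht; assumption.
Qed.

Lemma empty_pair_upto_of_lists n Xs Ys : NoDup Xs -> NoDup Ys -> length Xs = n -> length Ys = n ->
  (forall b, In b Xs -> P1 M phi kx ky b) -> (forall b, In b Ys -> P1 M phi kx ky b) ->
  (forall b c, In b Xs -> In c Ys -> ~ P2 M phi kx ky b c) ->
  exists t, empty_pair_upto n t.
Proof.
  intros ndX ndY lX lY hX hY hXY.
  destruct (exists_tuple_assignment
    (fun j => nth (Nat.div2 j) (if Nat.even j then Xs else Ys) [])) as [t ht].
  assert (hlen : forall Zs b, (forall b, In b Zs -> P1 M phi kx ky b) -> In b Zs -> length b = ky).
  { intros Zs b hZ hb. apply (proj1 (hZ b hb)). left. reflexivity. }
  assert (hL : forall i, i < n -> left_tuple t i = nth i Xs []).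
  { intros i hi. unfold left_tuple. rewrite ht; rewrite Nat.even_even, Nat.div2_double;
      [reflexivity | apply (hlen Xs); [exact hX | apply nth_In; lia]]. }
  assert (hR : forall i, i < n -> right_tuple t i = nth i Ys []).
  { intros i hi. unfold right_tuple. rewrite ht; rewrite Nat.even_odd, Nat.div2_odd';
      [reflexivity | apply (hlen Ys); [exact hY | apply nth_In; lia]]. }
  exists t. intros i j hi hj. unfold pair_condition.
  rewrite (hL i hi), (hR j hj), (hL j hj), (hR i hi).
  split; [apply hX, nth_In; lia|].
  split; [apply hY, nth_In; lia|].
  split; [apply hXY; apply nth_In; lia|].
  intro hij. split; intro heq; apply hij.
  - apply (proj1 (NoDup_nth Xs []) ndX); lia || exact heq.
  - apply (proj1 (NoDup_nth Ys []) ndY); lia || exact heq.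
Qed.

Lemma infinite_empty_pair_of_chain (t : nat -> carrier M) :
  (forall n, empty_pair_upto n t) -> infinite_empty_pair M phi kx ky.
Proof.
  intros ht.
  assert (Q : forall i j, pair_condition t i j) by (intros i j; apply (ht (S (Nat.max i j))); lia).
  set (B := left_tuple t). set (C := right_tuple t).
  assert (Binj : forall i j, B i = B j -> i = j).
  { intros i j h. destruct (Nat.eq_dec i j) as [e|ne]; [exact e|]. exfalso.
    apply (proj1 (proj2 (proj2 (proj2 (Q i j))) ne)), h. }
  assert (Cinj : forall i j, C i = C j -> i = j).
  { intros i j h. destruct (Nat.eq_dec i j) as [e|ne]; [exact e|]. exfalso.
    apply (proj2 (proj2 (proj2 (proj2 (Q i j))) ne)), h. }
  (* [g] sends [B i] to [C i]; off the range of [B] its value is irrelevant. *)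
  set (g := fun b => match excluded_middle_informative (exists i, b = B i) with
                     | left h => C (proj1_sig (constructive_indefinite_description _ h))
                     | right _ => b end).
  assert (hg : forall i, g (B i) = C i).
  { intro i. unfold g. destruct (excluded_middle_informative (exists i0, B i = B i0)) as [h|h].
    - destruct (constructive_indefinite_description _ h) as [j hj]. simpl.
      apply Binj in hj. subst. reflexivity.
    - exfalso. apply h. exists i. reflexivity. }
  exists (fun b => exists i, b = B i), (fun c => exists i, c = C i).
  split; [intros b [i ->]; apply (Q i i)|].
  split; [intros c [i ->]; apply (Q i i)|].
  split; [|split].
  - exists g. split; [|split].
    + intros b [i ->]. exists i. apply hg.
    + intros b b' [i ->] [j ->]. rewrite !hg. intro h. apply Cinj in h. subst. reflexivity.
    + intros c [i ->]. exists (B i). split; [exists i; reflexivity | apply hg].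
  - exists B. split; [intro n; exists n; reflexivity | exact Binj].
  - intros b c [i ->] [j ->]. apply (Q i j).
Qed.

Lemma infinite_empty_pair_of_large_empty_pairs : aleph1_saturated M ->
  (forall n, exists Xs Ys, NoDup Xs /\ NoDup Ys /\ length Xs = n /\ length Ys = n /\
     (forall b, In b Xs -> P1 M phi kx ky b) /\ (forall b, In b Ys -> P1 M phi kx ky b) /\
     (forall b c, In b Xs -> In c Ys -> ~ P2 M phi kx ky b c)) ->
  infinite_empty_pair M phi kx ky.
Proof.
  intros hsat hpairs.
  destruct (saturated_realizes_chain hsat tuple_base ltac:(unfold tuple_base; lia)
    empty_pair_at (fun n => ky * (2 * n))) as [t ht].
  - intros n t1 t2 h. rewrite !sat_empty_pair_at. apply empty_pair_upto_local, h.
  - intros n N t1 hnN. rewrite !sat_empty_pair_at. intros h i j hi hj. apply h; lia.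
  - intro n. destruct (hpairs n) as (Xs & Ys & ndX & ndY & lX & lY & hX & hY & hXY).
    destruct (empty_pair_upto_of_lists n Xs Ys ndX ndY lX lY hX hY hXY) as [t ht].
    exists t. apply sat_empty_pair_at, ht.
  - apply (infinite_empty_pair_of_chain t). intro n. apply sat_empty_pair_at, ht.
Qed.

End CharacteristicSequence.

Lemma not_P2_of_P2b {L : signature} (M : structure L) phi kx ky b c :
  P2b M phi kx ky b c = false -> ~ P2 M phi kx ky b c.
Proof. unfold P2b. destruct (excluded_middle_informative (P2 M phi kx ky b c)); congruence. Qed.

Theorem mainTheorem3 (L : signature) (T : theory L) (phi : formula L)
    (kx ky : nat) (M : structure L) :
  complete T ->
  formula_in phi (kx + ky) ->
  standing T phi kx ky ->
  is_model M T ->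
  aleph1_saturated M ->
  (exists delta : R, 0 < delta < 1 /\
     forall eps : R, 0 < eps < 1 -> forall N : nat,
       exists X Y : list (list (carrier M)),
         NoDup X /\ NoDup Y /\
         (forall b, In b X -> ~ In b Y) /\
         (forall b, In b X -> P1 M phi kx ky b) /\
         (forall b, In b Y -> P1 M phi kx ky b) /\
         length X = length Y /\ (N <= length X)%nat /\
         eps_regular M phi kx ky eps X Y /\
         density M phi kx ky X Y = delta) ->
  infinite_empty_pair M phi kx ky.
Proof.
  intros _ hphi _ _ hsat [delta [hdelta hregular]].
  assert (hpairs : forall eps, 0 < eps < 1 -> forall N, exists X Y,
    NoDup X /\ NoDup Y /\ (forall b, In b X -> P1 M phi kx ky b) /\
    (forall b, In b Y -> P1 M phi kx ky b) /\ length X = length Y /\ (N <= length X)%nat /\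
    regular_pair (P2b M phi kx ky) eps X Y /\ pair_density (P2b M phi kx ky) X Y = delta).
  { intros eps heps N.
    destruct (hregular eps heps N) as (X & Y & ndX & ndY & _ & hX & hY & lXY & hN & hreg & hdens).
    exists X, Y. exact (conj ndX (conj ndY (conj hX (conj hY (conj lXY (conj hN (conj hreg hdens))))))). }
  apply (infinite_empty_pair_of_large_empty_pairs M phi kx ky hphi hsat). intro n.
  destruct (large_empty_pairs _ _ delta hdelta hpairs n)
    as (Xs & Ys & ndX & ndY & lX & lY & hX & hY & hE).
  exists Xs, Ys. do 6 (split; [assumption|]).
  intros b c hb hc. apply not_P2_of_P2b, hE; assumption.
Qed.
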